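(* Let $f:2^{[n]}\to\mathbb{Z}$ be an integer-valued submodular function with $f(\emptyset)=0$ and $|f(S)|\le M$ for all $S\subseteq[n]$. Then for every $x\in[0,1]^n$, the Lovász subgradient $g(x)$ has at most $3M$ nonzero entries.
   Context: Notation: $[n]=\{1,\dots,n\}$. For a permutation $P=(P_1,\dots,P_n)$ of $[n]$, write $P[j]=\{P_1,\dots,P_j\}$ for $0\le j\le n$ (so $P[0]=\emptyset$). For $x\in\mathbb{R}^n$, the permutation $P_x$ consistent with $x$ is the permutation with $x_{P_1}\ge x_{P_2}\ge\dots\ge x_{P_n}$, ties broken lexicographically. The Lovász subgradient at $x$ is $g(x)\in\mathbb{R}^n$ with $g(x)_{P_k}=f(P[k])-f(P[k-1])$ for $k\in[n]$, where $P=P_x$. *)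

From HB Require Import structures.
From mathcomp Require Import all_boot all_order all_algebra.
Set Implicit Arguments. Unset Strict Implicit. Unset Printing Implicit Defensive.
Import Order.TTheory GRing.Theory Num.Theory.
Local Open Scope ring_scope.

Definition submodular (n : nat) (f : {set 'I_n} -> int) : Prop :=
  forall A B : {set 'I_n}, f (A :|: B) + f (A :&: B) <= f A + f B.

Definition consistent_rel (R : realFieldType) (n : nat) (x : 'I_n -> R)
  : rel 'I_n := fun i j => (x j < x i) || ((x i == x j) && (i <= j)%N).

Definition perm_of (R : realFieldType) (n : nat) (x : 'I_n -> R) : seq 'I_n :=
  sort (consistent_rel x) (enum 'I_n).

Definition prefix_set (n : nat) (P : seq 'I_n) (j : nat) : {set 'I_n} :=
  [set i in take j P].

(* Lovász subgradient: g(x)_{P_k} = f(P[k]) - f(P[k-1]).  If i = P_k then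
   index i P = k-1 (0-based). *)
Definition lovasz_subgrad (R : realFieldType) (n : nat) (f : {set 'I_n} -> int)
  (x : 'I_n -> R) (i : 'I_n) : int :=
  let P := perm_of x in
  f (prefix_set P (index i P).+1) - f (prefix_set P (index i P)).

(** Let g be the vector of marginal gains of f along the order P_x.  The gains
    telescope to f([n]) - f(∅), and by diminishing returns the gains on any set
    S add up to at most f(S) - f(∅).  Since g is integral, the number of its
    nonzero entries is at most Σ|g_i| = 2 Σ_{g_i > 0} g_i - Σ g_i, which is
    therefore at most 2 f({g > 0}) - f([n]) ≤ 3M. *)

From HB Require Import structures.
From mathcomp Require Import all_boot all_order all_algebra.
From mathcomp Require Import lra zify.

Set Implicit Arguments.
Unset Strict Implicit.
Unset Printing Implicit Defensive.
Import Order.TTheory GRing.Theory Num.Theory.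
Local Open Scope ring_scope.

Lemma set_rcons (T : finType) (s : seq T) (y : T) :
  [set:: rcons s y] = y |: [set:: s].
Proof. by apply/setP => z; rewrite !inE mem_rcons in_cons. Qed.

Section MarginalGains.
Variables (T : finType) (f : {set T} -> int) (P : seq T).
Hypothesis f_submod : forall A B, f (A :|: B) + f (A :&: B) <= f A + f B.
Hypothesis P_uniq : uniq P.

Definition marginal (i : T) : int :=
  f [set:: take (index i P).+1 P] - f [set:: take (index i P) P].

Lemma uniq_split_notin s y t : P = s ++ y :: t -> y \notin s.
Proof. by move=> defP; move: P_uniq; rewrite defP cat_uniq /= => /and4P[_ /norP[]]. Qed.

Lemma marginal_rcons s y t : P = rcons s y ++ t ->
  marginal y = f [set:: rcons s y] - f [set:: s].
Proof.
move=> defP; have defP' : P = s ++ y :: t by rewrite defP cat_rcons.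
have y_notin_s := uniq_split_notin defP'.
have idx_y : index y P = size s.
  by rewrite defP' index_cat (negbTE y_notin_s) /= eqxx addn0.
rewrite /marginal idx_y -(size_rcons s y) {1}defP take_size_cat //.
by rewrite defP' take_size_cat.
Qed.

Lemma sum_marginal_prefix s t : P = s ++ t ->
  \sum_(i <- s) marginal i = f [set:: s] - f set0.
Proof.
elim/last_ind: s t => [|s y IH] t defP; first by rewrite big_nil set_nil subrr.
rewrite big_rcons /= (IH (y :: t)) -?cat_rcons // (marginal_rcons defP).
lra.
Qed.

(* Diminishing returns: the gain of y on P[k] is at most its gain on the smaller
   set S ∩ P[k]. *)
Lemma sum_marginal_prefix_in s t (S : {set T}) : P = s ++ t ->
  \sum_(i <- s | i \in S) marginal i <= f (S :&: [set:: s]) - f set0.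
Proof.
elim/last_ind: s t => [|s y IH] t defP; first by rewrite big_nil set_nil setI0 subrr.
have defP' : P = s ++ y :: t by rewrite defP cat_rcons.
have y_notin_s : y \notin [set:: s] by rewrite inE (uniq_split_notin defP').
have IHs := IH _ defP'.
rewrite big_rcons /= set_rcons setIUr.
case: ifP => yS; last first.
  have -> : S :&: [set y] = set0.
    by apply/setP => z; rewrite !inE andbC; case: eqP => // ->.
  by rewrite set0U addr0.
have -> : S :&: [set y] = [set y] by apply/setIidPr; rewrite sub1set.
rewrite (marginal_rcons defP) set_rcons.
have := f_submod (y |: (S :&: [set:: s])) [set:: s].
have -> : (y |: (S :&: [set:: s])) :|: [set:: s] = y |: [set:: s].
  by rewrite -setUA (setUidPr (subsetIr _ _)).
have -> : (y |: (S :&: [set:: s])) :&: [set:: s] = S :&: [set:: s].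
  rewrite setIUl (setIidPl (subsetIr _ _)).
  have -> : [set y] :&: [set:: s] = set0 by apply/disjoint_setI0; rewrite disjoints1.
  by rewrite set0U.
rewrite setUC; lra.
Qed.

Hypothesis P_perm : perm_eq P (enum T).

Lemma set_perm_enum : [set:: P] = setT.
Proof. by apply/setP => z; rewrite !inE (perm_mem P_perm) mem_enum. Qed.

Lemma sum_marginal : \sum_i marginal i = f setT - f set0.
Proof.
rewrite -big_enum -(perm_big _ P_perm) -set_perm_enum.
by apply: (sum_marginal_prefix (t := [::])); rewrite cats0.
Qed.

Lemma sum_marginal_in (S : {set T}) : \sum_(i in S) marginal i <= f S - f set0.
Proof.
rewrite -(big_enum_cond _ _ T (mem S)) -(perm_big _ P_perm).
rewrite -[X in f X](setIT S) -set_perm_enum.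
by apply: (sum_marginal_prefix_in (t := [::])); rewrite cats0.
Qed.

End MarginalGains.

Lemma card_nonzero_int_le (T : finType) (g : T -> int) :
  #|[set i | g i != 0]|%:Z <= 2 * \sum_(i in [set i | 0 < g i]) g i - \sum_i g i.
Proof.
rewrite -sum1_card -natz natr_sum mulr_sumr.
rewrite big_mkcond [X in _ <= X - _]big_mkcond -sumrB /=.
apply: ler_sum => i _; rewrite !inE.
by case: (ltgtP (g i) 0) => [gi_lt0 | gi_gt0 | ->] /=; lia.
Qed.

Theorem lemma3p6 (R : realFieldType) (n : nat) (f : {set 'I_n} -> int) (M : R)
  (hsub : submodular f) (h0 : f set0 = 0)
  (hM : forall S : {set 'I_n}, `|(f S)%:~R| <= M)
  (x : 'I_n -> R) (hx : forall i, 0 <= x i <= 1) :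
  (#|[set i | lovasz_subgrad f x i != 0]|)%:R <= 3 * M.
Proof.
set g := marginal f (perm_of x).
have -> : lovasz_subgrad f x = g by [].
have P_perm : perm_eq (perm_of x) (enum 'I_n) by rewrite perm_sort.
have P_uniq : uniq (perm_of x) by rewrite (perm_uniq P_perm) enum_uniq.
have sum_g : \sum_i g i = f setT - f set0 := sum_marginal f P_uniq P_perm.
have sum_pos_g := sum_marginal_in hsub P_uniq P_perm [set i | 0 < g i].
have card_le : #|[set i | g i != 0]|%:Z <= 2 * f [set i | 0 < g i] - f setT.
  have := card_nonzero_int_le g; rewrite sum_g h0; lra.
have f_bounds S : - M <= (f S)%:~R <= M by rewrite -ler_norml.
have /andP[_ fpos_le] := f_bounds [set i | 0 < g i].
have /andP[fT_ge _] := f_bounds setT.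
rewrite -(ler_int R) intrB intrM !pmulrn in card_le.
lra.
Qed.
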